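(* Let $\Omega\subset\mathbb{R}^n$ and let $h^{jk}\in C^2$ ($j,k=1,\dots,n$) be functions of $x$ with $h^{jk}=h^{kj}$. Let $u\in C^2(\mathbb{R}^{2+n};\mathbb{R})$, $\ell\in C^3(\mathbb{R}^{2+n};\mathbb{R})$ (functions of $(t,s,x)$) and $\Psi\in C^1(\mathbb{R}^n;\mathbb{R})$. Set $\theta=e^\ell$ and $v=\theta u$. Define $$A=\sum_{j,k=1}^n(h^{jk}\ell_{x_j}\ell_{x_k}-h^{jk}_{x_j}\ell_{x_k}-h^{jk}\ell_{x_jx_k})-\ell_t^2-\ell_s^2+\ell_{tt}+\ell_{ss}-\Psi,$$ $$c^{jk}=\sum_{j',k'=1}^n\big[2h^{jk'}(h^{j'k}\ell_{x_{j'}})_{x_{k'}}-(h^{jk}h^{j'k'}\ell_{x_{j'}})_{x_{k'}}\big]+h^{jk}(\ell_{tt}+\ell_{ss}-\Psi),$$ $$B=2\Big[A\Psi-(A\ell_t)_t-(A\ell_s)_s+\sum_{j,k=1}^n(Ah^{jk}\ell_{x_j})_{x_k}\Big],$$ $V=(V^1,\dots,V^n)$ with $$V^k=2\sum_{j,j',k'}h^{jk}h^{j'k'}\ell_{x_{j'}}v_{x_j}v_{x_{k'}}+\sum_jh^{jk}A\ell_{x_j}v^2-\Psi v\sum_jh^{jk}v_{x_j}-\sum_{j,j',k'}h^{jk}h^{j'k'}\ell_{x_j}v_{x_{j'}}v_{x_{k'}}-2(\ell_tv_t+\ell_sv_s)\sum_jh^{jk}v_{x_j}+\sum_jh^{jk}\ell_{x_j}(v_t^2+v_s^2),$$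 $$M=\ell_t\Big(v_t^2-v_s^2+\sum_{j,k}h^{jk}v_{x_j}v_{x_k}\Big)-2\sum_{j,k}h^{jk}\ell_{x_j}v_{x_k}v_t+2\ell_sv_sv_t+\Psi vv_t-A\ell_tv^2,$$ $$N=\ell_s\Big(v_s^2-v_t^2+\sum_{j,k}h^{jk}v_{x_j}v_{x_k}\Big)-2\sum_{j,k}h^{jk}\ell_{x_j}v_{x_k}v_s+2\ell_tv_sv_t+\Psi vv_s-A\ell_sv^2.$$ Then, pointwise, $$\theta^2\Big|u_{tt}+u_{ss}-\sum_{j,k}(h^{jk}u_{x_j})_{x_k}\Big|^2+2\,\mathrm{div}\,V+2\partial_tM+2\partial_sN\ge 2\Big[\ell_{tt}-\ell_{ss}+\sum_{j,k}(h^{jk}\ell_{x_j})_{x_k}+\Psi\Big]v_t^2-8\sum_{j,k}h^{jk}\ell_{tx_j}v_{x_k}v_t+8\ell_{st}v_sv_t-8\sum_{j,k}h^{jk}\ell_{sx_j}v_{x_k}v_s+2\Big[\ell_{ss}-\ell_{tt}+\sum_{j,k}(h^{jk}\ell_{x_j})_{x_k}+\Psi\Big]v_s^2+2\sum_{j,k}c^{jk}v_{x_j}v_{x_k}-2\sum_{j,k}h^{jk}\Psi_{x_j}vv_{x_k}+Bv^2,$$ where $\mathrm{div}\,V=\sum_{k=1}^n\partial_{x_k}V^k$.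
   Context: Subscripts $t,s,x_j$ denote partial derivatives. The inequality holds at every point where all quantities are defined. *)

(* R : realType, points of R^{2+n} are row vectors
   'rV[R]_(2+n) with coordinates (t, s, x_0, ..., x_{n-1}). *)
From HB Require Import structures.
From mathcomp Require Import all_boot all_order all_algebra.
From mathcomp Require Import all_classical all_reals all_analysis.
Set Implicit Arguments. Unset Strict Implicit. Unset Printing Implicit Defensive.
Import Order.TTheory GRing.Theory Num.Theory.
Import numFieldNormedType.Exports.
Local Open Scope ring_scope.

Section Defs.
Variable R : realType.

Definition ev (m : nat) (i : 'I_m) : 'rV[R]_m := delta_mx 0 i.

Definition pd (m : nat) (i : 'I_m) (f : 'rV[R]_m -> R) : 'rV[R]_m -> R :=
  fun p => derive f p (ev i).

Fixpoint Ck (m : nat) (k : nat) (f : 'rV[R]_m -> R) : Prop :=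
  match k with
  | 0 => continuous f
  | k'.+1 => continuous f /\ (forall (i : 'I_m) p, derivable f p (ev i)) /\
             (forall i : 'I_m, Ck k' (pd i f))
  end.

Variable n : nat.

Definition tI : 'I_(2 + n) := lshift n (@Ordinal 2 0 isT).
Definition sI : 'I_(2 + n) := lshift n (@Ordinal 2 1 isT).
Definition xI (j : 'I_n) : 'I_(2 + n) := rshift 2 j.

Definition xpart (p : 'rV[R]_(2 + n)) : 'rV[R]_n := rsubmx p.

Definition Dt := pd tI.
Definition Ds := pd sI.
Definition Dx (j : 'I_n) := pd (xI j).

Variables (h : 'I_n -> 'I_n -> 'rV[R]_n -> R)
          (l u : 'rV[R]_(2 + n) -> R) (Psi : 'rV[R]_n -> R).

Definition H j k : 'rV[R]_(2 + n) -> R := fun p => h j k (xpart p).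
Definition Ps : 'rV[R]_(2 + n) -> R := fun p => Psi (xpart p).

Definition theta : 'rV[R]_(2 + n) -> R := fun p => expR (l p).
Definition v : 'rV[R]_(2 + n) -> R := fun p => theta p * u p.

Definition A : 'rV[R]_(2 + n) -> R := fun p =>
  \sum_(j < n) \sum_(k < n)
     (H j k p * Dx j l p * Dx k l p - Dx j (H j k) p * Dx k l p
      - H j k p * Dx k (Dx j l) p)
  - Dt l p ^+ 2 - Ds l p ^+ 2 + Dt (Dt l) p + Ds (Ds l) p - Ps p.

Definition c (j k : 'I_n) : 'rV[R]_(2 + n) -> R := fun p =>
  \sum_(j' < n) \sum_(k' < n)
     (2 * H j k' p * Dx k' (fun q => H j' k q * Dx j' l q) p
      - Dx k' (fun q => H j k q * H j' k' q * Dx j' l q) p)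
  + H j k p * (Dt (Dt l) p + Ds (Ds l) p - Ps p).

Definition B : 'rV[R]_(2 + n) -> R := fun p =>
  2 * (A p * Ps p - Dt (fun q => A q * Dt l q) p - Ds (fun q => A q * Ds l q) p
       + \sum_(j < n) \sum_(k < n) Dx k (fun q => A q * H j k q * Dx j l q) p).

Definition V (k : 'I_n) : 'rV[R]_(2 + n) -> R := fun p =>
  2 * (\sum_(j < n) \sum_(j' < n) \sum_(k' < n)
         H j k p * H j' k' p * Dx j' l p * Dx j v p * Dx k' v p)
  + (\sum_(j < n) H j k p * A p * Dx j l p) * v p ^+ 2
  - Ps p * v p * (\sum_(j < n) H j k p * Dx j v p)
  - (\sum_(j < n) \sum_(j' < n) \sum_(k' < n)
         H j k p * H j' k' p * Dx j l p * Dx j' v p * Dx k' v p)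
  - 2 * (Dt l p * Dt v p + Ds l p * Ds v p) * (\sum_(j < n) H j k p * Dx j v p)
  + (\sum_(j < n) H j k p * Dx j l p) * (Dt v p ^+ 2 + Ds v p ^+ 2).

Definition M : 'rV[R]_(2 + n) -> R := fun p =>
  Dt l p * (Dt v p ^+ 2 - Ds v p ^+ 2
            + \sum_(j < n) \sum_(k < n) H j k p * Dx j v p * Dx k v p)
  - 2 * (\sum_(j < n) \sum_(k < n) H j k p * Dx j l p * Dx k v p) * Dt v p
  + 2 * Ds l p * Ds v p * Dt v p + Ps p * v p * Dt v p
  - A p * Dt l p * v p ^+ 2.

Definition N : 'rV[R]_(2 + n) -> R := fun p =>
  Ds l p * (Ds v p ^+ 2 - Dt v p ^+ 2
            + \sum_(j < n) \sum_(k < n) H j k p * Dx j v p * Dx k v p)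
  - 2 * (\sum_(j < n) \sum_(k < n) H j k p * Dx j l p * Dx k v p) * Ds v p
  + 2 * Dt l p * Ds v p * Dt v p + Ps p * v p * Ds v p
  - A p * Ds l p * v p ^+ 2.

Definition divV : 'rV[R]_(2 + n) -> R := fun p => \sum_(k < n) Dx k (V k) p.

Definition lhs31 : 'rV[R]_(2 + n) -> R := fun p =>
  theta p ^+ 2 * `| Dt (Dt u) p + Ds (Ds u) p
                    - \sum_(j < n) \sum_(k < n) Dx k (fun q => H j k q * Dx j u q) p | ^+ 2
  + 2 * divV p + 2 * Dt M p + 2 * Ds N p.

Definition rhs31 : 'rV[R]_(2 + n) -> R := fun p =>
  2 * (Dt (Dt l) p - Ds (Ds l) p
       + \sum_(j < n) \sum_(k < n) Dx k (fun q => H j k q * Dx j l q) p + Ps p)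
    * Dt v p ^+ 2
  - 8 * (\sum_(j < n) \sum_(k < n) H j k p * Dx j (Dt l) p * Dx k v p * Dt v p)
  + 8 * Dt (Ds l) p * Ds v p * Dt v p
  - 8 * (\sum_(j < n) \sum_(k < n) H j k p * Dx j (Ds l) p * Dx k v p * Ds v p)
  + 2 * (Ds (Ds l) p - Dt (Dt l) p
         + \sum_(j < n) \sum_(k < n) Dx k (fun q => H j k q * Dx j l q) p + Ps p)
    * Ds v p ^+ 2
  + 2 * (\sum_(j < n) \sum_(k < n) c j k p * Dx j v p * Dx k v p)
  - 2 * (\sum_(j < n) \sum_(k < n) H j k p * Dx j Ps p * v p * Dx k v p)
  + B p * v p ^+ 2.

End Defs.

(* Let P u = u_tt + u_ss - Σ (h^{jk} u_{x_j})_{x_k} and v = θ u.  Then θ P u = I1 + I2 with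
     I1 = v_tt + v_ss - Σ (h^{jk} v_{x_j})_{x_k} - A v,
     I2 = -2 ℓ_t v_t - 2 ℓ_s v_s + 2 Σ h^{jk} ℓ_{x_j} v_{x_k} - Ψ v,
   and expanding 2 I1 I2 by the Leibniz rule produces the right-hand side minus
   2 div V + 2 ∂_t M + 2 ∂_s N.  Hence the left-hand side minus the right-hand side is
   I1² + I2² ≥ 0.
   This pointwise identity is a polynomial identity between partial derivatives of
   ℓ, u, h^{jk} and Ψ, holding modulo the symmetry of h, the symmetry of mixed partial
   derivatives (Schwarz), the independence of h and Ψ from t and s, θ_z = θ ℓ_z and the
   renaming of summation indices.  It is verified by a normaliser for reified
   expressions with symbolic summation indices, proved sound once and for all. *)
From HB Require Import structures.
From mathcomp Require Import all_boot all_order all_algebra.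
From mathcomp Require Import all_classical all_reals all_analysis.
From mathcomp Require Import ring.
Import Order.TTheory GRing.Theory Num.Theory.
Import numFieldNormedType.Exports.
Local Open Scope ring_scope.

(** * C^k functions and symmetry of second derivatives *)

Section Ck_theory.
Context {R : realType} {m : nat}.
Implicit Types f g : 'rV[R]_m -> R.

Lemma Ck_continuous {k f} : Ck k f -> continuous f.
Proof. by case: k => [|k] // []. Qed.

Lemma Ck_derivable {k f} : Ck k.+1 f -> forall i p, derivable f p (ev R i).
Proof. by case=> _ []. Qed.

Lemma Ck_pd {k f} : Ck k.+1 f -> forall i, Ck k (pd i f).
Proof. by case=> _ []. Qed.

Lemma CkW {k f} : Ck k.+1 f -> Ck k f.
Proof.
elim: k f => [|k IH] f; first by case.
by case=> cf [df pdf]; split=> //; split=> // i; exact: IH.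
Qed.

Lemma Ck_le {j k f} : (j <= k)%N -> Ck k f -> Ck j f.
Proof.
move=> le_jk; rewrite -(subnK le_jk).
by elim: (k - j)%N => [|d IH] // /CkW; exact: IH.
Qed.

Lemma pd_cst (c : R) i : pd i (fun _ : 'rV[R]_m => c) = fun _ => 0.
Proof. by apply/funext => p; rewrite /pd derive_cst. Qed.

Lemma Ck_cst (c : R) k : Ck k (fun _ : 'rV[R]_m => c).
Proof.
elim: k c => [|k IH] c; first exact: cst_continuous.
split; first exact: cst_continuous.
by split=> [i p|i]; [exact: derivable_cst | rewrite pd_cst].
Qed.

End Ck_theory.

Section directional_derivatives.
Context {R : realType} {W : normedModType R}.
Implicit Types (f : W -> R) (v w p : W).

Lemma is_derive_big_seq (I : eqType) (s : seq I) (F : I -> W -> R) (dF : I -> R) p v :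
  (forall i, i \in s -> is_derive p v (F i) (dF i)) ->
  is_derive p v (fun q => \sum_(i <- s) F i q) (\sum_(i <- s) dF i).
Proof.
move=> dF_F; rewrite -fct_sumE big_seq [X in is_derive _ _ _ X]big_seq.
elim/big_rec2: _ => [|i f df si]; first exact: is_derive_cst.
by move=> f_df; apply: is_deriveD => //; exact: dF_F.
Qed.

Let line_quotient f v c t0 :
  (fun h : R => h^-1 *: (((fun t : R => f (t *: v + c)) \o shift t0) (h *: 1)
                          - f (t0 *: v + c))) =
  (fun h : R => h^-1 *: ((f \o shift (t0 *: v + c)) (h *: v) - f (t0 *: v + c))).
Proof.
apply/funext => h /=; congr (_ *: (_ - _)); congr f.
by rewrite -[h%:A]/(h * 1) mulr1 scalerDl addrA.
Qed.

Lemma derivable_line f v c t0 :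
  derivable (fun t : R => f (t *: v + c)) t0 1 <-> derivable f (t0 *: v + c) v.
Proof. by rewrite /derivable line_quotient. Qed.

Lemma derive_line f v c t0 :
  derive (fun t : R => f (t *: v + c)) t0 1 = derive f (t0 *: v + c) v.
Proof. by rewrite /derive line_quotient. Qed.

Lemma is_derive_line {f v c t0} : derivable f (t0 *: v + c) v ->
  is_derive t0 1 (fun t : R => f (t *: v + c)) (derive f (t0 *: v + c) v).
Proof. by move=> df; split; [apply/derivable_line | rewrite derive_line]. Qed.

Lemma is_derive_expR_comp {f v p} : derivable f p v ->
  is_derive p v (fun q => expR (f q)) (expR (f p) * derive f p v).
Proof.
move=> df; have p0 : 0 *: v + p = p by rewrite scale0r add0r.
have df0 : derivable f (0 *: v + p) v by rewrite p0.
have [d_line D_line] :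
    is_derive (0 : R) 1 (expR \o (fun t => f (t *: v + p))) (expR (f p) * derive f p v).
  apply: is_derive_eq (is_derive1_comp (is_derive_expR _) (is_derive_line df0)) _.
  by rewrite p0.
split; first by move/(derivable_line (fun q => expR (f q)) v p 0): d_line; rewrite p0.
by rewrite -[in LHS]p0 -derive_line.
Qed.

Lemma MVT_is_derive {g dg : R -> R} {a b : R} :
  (forall t : R, is_derive t 1 g (dg t)) -> a < b ->
  exists2 t, a < t < b & g b - g a = dg t * (b - a).
Proof.
move=> dg_g ab; have d_g t : derivable g t 1 by case: (dg_g t).
have [t tab ->] := MVT ab (fun t _ => dg_g t) (derivable_within_continuous (fun t _ => d_g t)).
by exists t; rewrite in_itv /= in tab.
Qed.

Definition second_difference f v w (s : R) p :=
  f (s *: v + (s *: w + p)) - f (s *: v + p) - (f (s *: w + p) - f p).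

Lemma second_differenceC f v w s p :
  second_difference f v w s p = second_difference f w v s p.
Proof. by rewrite /second_difference [s *: w + (s *: v + p)]addrCA; ring. Qed.

Lemma second_difference_MVT f v w s p :
  (forall q, derivable f q v) -> (forall q, derivable (fun x => derive f x v) q w) ->
  0 < s ->
  exists2 q, `|q - p| <= s * (`|v| + `|w|) &
    second_difference f v w s p = s * (s * derive (fun x => derive f x v) q w).
Proof.
move=> dfv dfvw s_gt0.
have [a /andP[a_gt0 a_lts] Ea] :=
  @MVT_is_derive (fun t => f (t *: v + (s *: w + p)) - f (t *: v + p)) _ 0 s
    (fun t => is_deriveB (is_derive_line (dfv (t *: v + (s *: w + p))))
                         (is_derive_line (dfv (t *: v + p)))) s_gt0.
have [b /andP[b_gt0 b_lts] Eb] :=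
  MVT_is_derive (fun t => is_derive_line (dfvw (t *: w + (a *: v + p)))) s_gt0.
exists (b *: w + (a *: v + p)).
  rewrite addrA addrK (le_trans (ler_normD _ _)) // !normrZ mulrDr addrC.
  by rewrite !gtr0_norm //; apply: lerD; apply: ler_wpM2r => //; exact: ltW.
move: Ea Eb; rewrite /second_difference !scale0r !add0r !subr0 => ->.
by rewrite [a *: v + (s *: w + p)]addrCA => ->; ring.
Qed.

Lemma derive_comm f v w p :
  (forall q, derivable f q v) -> (forall q, derivable f q w) ->
  (forall q, derivable (fun x => derive f x v) q w) ->
  (forall q, derivable (fun x => derive f x w) q v) ->
  continuous (fun q => derive (fun x => derive f x v) q w) ->
  continuous (fun q => derive (fun x => derive f x w) q v) ->
  derive (fun x => derive f x v) p w = derive (fun x => derive f x w) p v.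
Proof.
move=> dfv dfw dfvw dfwv cF1 cF2.
set F1 := fun q => _ in cF1; set F2 := fun q => _ in cF2.
suff close e : 0 < e -> `|F1 p - F2 p| < e + e.
  apply/eqP; rewrite -subr_eq0 -normr_le0; apply/ler_addgt0Pr => e e_gt0.
  by rewrite add0r (splitr e) ltW // close // divr_gt0.
move=> e_gt0.
have F1_near : \forall q \near p, `|F1 p - F1 q| < e.
  exact: (cvgrPdist_lt _ _).1 (cF1 p) e e_gt0.
have F2_near : \forall q \near p, `|F2 p - F2 q| < e.
  exact: (cvgrPdist_lt _ _).1 (cF2 p) e e_gt0.
have [d d_gt0 near_p] := (nbhs_normP _ _).1 (filterI F1_near F2_near).
pose C := `|v| + `|w|; pose s := d / (C + 1).
have C_ge0 : 0 <= C by rewrite addr_ge0.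
have s_gt0 : 0 < s by rewrite divr_gt0 // ltr_wpDl.
have sC_lt_d : s * C < d.
  by rewrite /s mulrAC ltr_pdivrMr ?ltr_wpDl // ltr_pM2l // ltrDl.
have [q1 q1p E1] := @second_difference_MVT f v w s p dfv dfvw s_gt0.
have [q2 q2p E2] := @second_difference_MVT f w v s p dfw dfwv s_gt0.
have F12 : F1 q1 = F2 q2.
  move: E1 E2; rewrite second_differenceC => -> /eqP.
  by rewrite !(inj_eq (mulfI (lt0r_neq0 s_gt0))) => /eqP.
have near_q q : `|q - p| <= s * C -> `|F1 p - F1 q| < e /\ `|F2 p - F2 q| < e.
  by move=> qp; apply: near_p; rewrite /ball_ /= distrC (le_lt_trans qp).
have [Fq1 _] := near_q q1 q1p.
move: q2p; rewrite [`|w| + _]addrC => /near_q [_ Fq2].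
rewrite F12 in Fq1.
have := ltrD Fq1 Fq2; apply: le_lt_trans.
by rewrite [X in _ <= _ + X]distrC ler_distD.
Qed.

End directional_derivatives.

Lemma pdC (R : realType) (m : nat) (f : 'rV[R]_m -> R) (i j : 'I_m) p :
  Ck 2 f -> pd j (pd i f) p = pd i (pd j f) p.
Proof.
move=> f_C2; have f_C1 := CkW f_C2.
apply: derive_comm => [q|q|q|q||].
- exact: Ck_derivable f_C1 i q.
- exact: Ck_derivable f_C1 j q.
- exact: Ck_derivable (Ck_pd f_C2 i) j q.
- exact: Ck_derivable (Ck_pd f_C2 j) i q.
- exact: Ck_continuous (Ck_pd (Ck_pd f_C2 i) j).
- exact: Ck_continuous (Ck_pd (Ck_pd f_C2 j) i).
Qed.


(** * Jet expressions and their normal form *)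

(* [Atom b xs ds] is the partial derivative along the directions [ds] of the base
   function coded by [b]: 0 = ℓ, 1 = u, 2 = θ, 3 = h^{x y} for [xs = [:: x; y]],
   4 = Ψ.  Summation indices are de Bruijn indices, [Sum] binding index 0; the
   direction 0 is t, 1 is s and [x.+2] is the x-coordinate named by index [x].
   A monomial [(c, k, A)] stands for c times the sum over k fresh indices of the
   product of the atoms [A]. *)
Inductive jet_expr :=
| Cst of nat
| Atom of nat & seq nat & seq nat
| Add of jet_expr & jet_expr
| Mul of jet_expr & jet_expr
| Opp of jet_expr
| Sum of jet_expr
| Der of nat & jet_expr.

Definition atom := (nat * seq nat * seq nat)%type.
Definition mono := (int * nat * seq atom)%type.

Definition dir_rename (f : nat -> nat) (d : nat) := if d is x.+2 then (f x).+2 else d.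
Definition atom_rename f (a : atom) : atom :=
  (a.1.1, map f a.1.2, map (dir_rename f) a.2).
Definition lift_above (c k x : nat) := if (x < c)%N then x else (x + k)%N.

(* The indices bound in [m2] become the innermost ones of the product. *)
Definition mono_mul (m1 m2 : mono) : mono :=
  (m1.1.1 * m2.1.1, (m1.1.2 + m2.1.2)%N,
   map (atom_rename (addn^~ m2.1.2)) m1.2 ++
   map (atom_rename (lift_above m2.1.2 m1.1.2)) m2.2).

Definition dir_shift k d := if d is x.+2 then (x + k).+2 else d.
(* θ is never differentiated symbolically: θ_z = θ ℓ_z. *)
Definition atom_derive (a : atom) (d : nat) : seq (int * seq atom) :=
  if (a.1.1 == 2%N) && (a.2 == [::]) then [:: (1%:Z, [:: a; (0%N, [::], [:: d])])]
  else [:: (1%:Z, [:: (a.1.1, a.1.2, rcons a.2 d)])].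
Fixpoint prod_derive (d : nat) (A : seq atom) : seq (int * seq atom) :=
  if A is a :: A' then [seq (p.1, p.2 ++ A') | p <- atom_derive a d] ++
                       [seq (p.1, a :: p.2) | p <- prod_derive d A']
  else [::].
Definition mono_derive d (m : mono) : seq mono :=
  [seq (m.1.1 * p.1, m.1.2, p.2) | p <- prod_derive (dir_shift m.1.2 d) m.2].
Definition poly_derive d (P : seq mono) := flatten [seq mono_derive d m | m <- P].

Fixpoint normalize (e : jet_expr) : seq mono :=
  match e with
  | Cst c => [:: (c%:Z, 0%N, [::])]
  | Atom b xs ds => [:: (1%:Z, 0%N, [:: (b, xs, ds)])]
  | Add e1 e2 => normalize e1 ++ normalize e2
  | Mul e1 e2 => [seq mono_mul m1 m2 | m1 <- normalize e1, m2 <- normalize e2]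
  | Opp e => [seq (- m.1.1, m.1.2, m.2) | m <- normalize e]
  | Sum e => [seq (m.1.1, m.1.2.+1, m.2) | m <- normalize e]
  | Der d e => poly_derive d (normalize e)
  end.

(* One more derivative keeps the atom within ℓ ∈ C^3, u ∈ C^2, h ∈ C^2, Ψ ∈ C^1. *)
Definition derivable_atom (a : atom) : bool :=
  match a.1.1 with
  | 0 => (size a.2 <= 2)%N | 1 => (size a.2 <= 1)%N | 2 => a.2 == [::]
  | 3 => (size a.2 <= 1)%N | 4 => a.2 == [::] | _ => false end.

Fixpoint derivable_expr (e : jet_expr) : bool :=
  match e with
  | Cst _ | Atom _ _ _ => true
  | Add e1 e2 | Mul e1 e2 => derivable_expr e1 && derivable_expr e2
  | Opp e | Sum e => derivable_expr e
  | Der d e => derivable_expr e && all (fun m => all derivable_atom m.2) (normalize e)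
  end.

(* h and Ψ do not depend on t and s. *)
Definition vanishing_atom (a : atom) : bool :=
  (3 <= a.1.1)%N && has (fun d => (d < 2)%N) a.2.

(* Derivatives of order at most the regularity of the base function commute. *)
Definition commuting_atom (a : atom) : bool :=
  match a.1.1 with
  | 0 => (size a.2 <= 3)%N | 1 => (size a.2 <= 2)%N | 3 => (size a.2 <= 2)%N
  | _ => false end.

Fixpoint bubble_pass (x : nat) (ds : seq nat) : seq nat :=
  if ds is y :: ds' then
    if (y < x)%N then y :: bubble_pass x ds' else x :: bubble_pass y ds'
  else [:: x].
Definition bubble_step (ds : seq nat) := if ds is x :: ds' then bubble_pass x ds' else [::].
Definition bubble_sort (ds : seq nat) := iter (size ds) bubble_step ds.

Definition sort_pair (xs : seq nat) :=
  if xs is [:: x; y] then (if (y < x)%N then [:: y; x] else xs) else xs.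

Definition atom_canon (a : atom) : atom :=
  (a.1.1, (if a.1.1 == 3%N then sort_pair a.1.2 else a.1.2),
   if commuting_atom a then bubble_sort a.2 else a.2).

Fixpoint lex_leq (s t : seq nat) : bool :=
  match s, t with
  | [::], _ => true
  | _ :: _, [::] => false
  | x :: s', y :: t' => (x < y)%N || ((x == y) && lex_leq s' t')
  end.
Definition atom_code (a : atom) : seq nat := a.1.1 :: size a.1.2 :: a.1.2 ++ size a.2 :: a.2.
Definition atom_leq (a b : atom) := lex_leq (atom_code a) (atom_code b).
Definition mono_code (m : mono) : seq nat := m.1.2 :: flatten (map atom_code m.2).

Definition swap_var (i x : nat) : nat :=
  if x == i then i.+1 else if x == i.+1 then i else x.
Definition mono_swap (m : mono) (i : nat) : mono :=
  if (i.+1 < m.1.2)%N then (m.1.1, m.1.2, map (atom_rename (swap_var i)) m.2) else m.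
Definition sort_atoms (m : mono) : mono := (m.1.1, m.1.2, sort atom_leq (map atom_canon m.2)).

(* Sequences of adjacent transpositions, one for each ordering of k indices; the
   canonical form of a monomial is the least of its renamings. *)
Fixpoint swap_words (k : nat) : seq (seq nat) :=
  if k is k'.+1 then
    [seq w ++ rev (iota j (k' - j)) | w <- swap_words k', j <- iota 0 k]
  else [:: [::]].
Definition pick_min (m : mono) (L : seq mono) : mono :=
  foldl (fun b c => if lex_leq (mono_code c) (mono_code b) then c else b) m L.
Definition mono_canon (m : mono) : mono :=
  pick_min (sort_atoms m) [seq sort_atoms (foldl mono_swap m w) | w <- swap_words m.1.2].

Fixpoint add_mono (m : mono) (P : seq mono) : seq mono :=
  if P is m' :: P' then
    if (m'.1.2 == m.1.2) && (m'.2 == m.2) then (m'.1.1 + m.1.1, m'.1.2, m'.2) :: P'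
    else m' :: add_mono m P'
  else [:: m].
Definition reduce (P : seq mono) : seq mono :=
  foldr add_mono [::] (map mono_canon [seq m <- P | ~~ has vanishing_atom m.2]).
Definition check_zero (e : jet_expr) : bool :=
  derivable_expr e && all (fun m => m.1.1 == 0) (reduce (normalize e)).

(** * Semantics and soundness of the normaliser *)

Section jet_semantics.
Variables (R : realType) (n : nat) (h : 'I_n -> 'I_n -> 'rV[R]_n -> R)
  (l u : 'rV[R]_(2 + n) -> R) (Psi : 'rV[R]_n -> R).
Local Notation V := 'rV[R]_(2 + n).
Implicit Types (rho : seq 'I_n) (a : atom) (A : seq atom) (m : mono) (P : seq mono).

(* An unbound index denotes t; such indices never occur in closed expressions. *)
Definition dir_index rho (d : nat) : 'I_(2 + n) :=
  match d with
  | 0 => tI n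
  | 1 => sI n
  | x.+2 => if onth rho x is Some j then xI j else tI n
  end.

Fixpoint pds rho (ds : seq nat) (f : V -> R) : V -> R :=
  if ds is d :: ds' then pds rho ds' (pd (dir_index rho d) f) else f.

(* An ill-formed index list for h denotes 0. *)
Definition base_fun rho (b : nat) (xs : seq nat) : V -> R :=
  match b with
  | 0 => l
  | 1 => u
  | 2 => theta l
  | 3 => if map (onth rho) xs is [:: Some j; Some k] then H h j k else fun _ => 0
  | _ => Ps Psi
  end.

Definition atom_fun rho b xs ds := pds rho ds (base_fun rho b xs).

Fixpoint jet_eval rho (e : jet_expr) (q : V) : R :=
  match e with
  | Cst c => c%:R
  | Atom b xs ds => atom_fun rho b xs ds q
  | Add e1 e2 => jet_eval rho e1 q + jet_eval rho e2 q
  | Mul e1 e2 => jet_eval rho e1 q * jet_eval rho e2 q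
  | Opp e => - jet_eval rho e q
  | Sum e => \sum_(j < n) jet_eval (j :: rho) e q
  | Der d e => pd (dir_index rho d) (jet_eval rho e) q
  end.

Fixpoint sum_vars (k : nat) (F : seq 'I_n -> R) rho : R :=
  if k is k'.+1 then \sum_(j < n) sum_vars k' F (j :: rho) else F rho.

Definition atom_eval rho a q := atom_fun rho a.1.1 a.1.2 a.2 q.
Definition prod_eval rho A q := \prod_(a <- A) atom_eval rho a q.
Definition mono_eval rho m q := m.1.1%:~R * sum_vars m.1.2 (fun r => prod_eval r m.2 q) rho.
Definition poly_eval rho P q := \sum_(m <- P) mono_eval rho m q.
Definition lin_eval rho (L : seq (int * seq atom)) q :=
  \sum_(p <- L) p.1%:~R * prod_eval rho p.2 q.

Lemma poly_eval_cat rho P1 P2 q :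
  poly_eval rho (P1 ++ P2) q = poly_eval rho P1 q + poly_eval rho P2 q.
Proof. by rewrite /poly_eval big_cat. Qed.

Lemma prod_eval_cat rho A1 A2 q :
  prod_eval rho (A1 ++ A2) q = prod_eval rho A1 q * prod_eval rho A2 q.
Proof. by rewrite /prod_eval big_cat. Qed.

Lemma lin_eval_cat rho L1 L2 q :
  lin_eval rho (L1 ++ L2) q = lin_eval rho L1 q + lin_eval rho L2 q.
Proof. by rewrite /lin_eval big_cat. Qed.

Lemma onth_cat_size (s rho : seq 'I_n) x : onth (s ++ rho) (x + size s) = onth rho x.
Proof. by rewrite onth_cat ltnNge leq_addl /= addnK. Qed.

Section renaming.
Variables (f : nat -> nat) (rho1 rho2 : seq 'I_n).
Hypothesis f_rho : forall x, onth rho2 (f x) = onth rho1 x.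

Lemma dir_index_rename d : dir_index rho2 (dir_rename f d) = dir_index rho1 d.
Proof. by case: d => [|[|x]] //; rewrite /= f_rho. Qed.

Lemma pds_rename ds F : pds rho2 (map (dir_rename f) ds) F = pds rho1 ds F.
Proof. by elim: ds F => [|d ds IH] F //=; rewrite dir_index_rename IH. Qed.

Lemma atom_eval_rename a q : atom_eval rho2 (atom_rename f a) q = atom_eval rho1 a q.
Proof.
case: a => [[b xs] ds]; rewrite /atom_eval /atom_fun /= pds_rename; congr pds.
by case: b => [|[|[|[|b]]]] //=; rewrite -map_comp (eq_map f_rho).
Qed.

Lemma prod_eval_rename A q :
  prod_eval rho2 (map (atom_rename f) A) q = prod_eval rho1 A q.
Proof. by rewrite /prod_eval big_map; apply: eq_bigr => a _; exact: atom_eval_rename. Qed.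

End renaming.

Lemma sum_vars_ext k F G rho rho' :
  (forall s, size s = k -> F (s ++ rho) = G (s ++ rho')) ->
  sum_vars k F rho = sum_vars k G rho'.
Proof.
elim: k rho rho' => [|k IH] rho rho' FG /=; first exact: (FG [::]).
apply: eq_bigr => j _; apply: IH => s sk.
by rewrite -!cat_rcons; apply: FG; rewrite size_rcons sk.
Qed.

Lemma sum_varsD k1 k2 F rho :
  sum_vars (k1 + k2) F rho = sum_vars k1 (sum_vars k2 F) rho.
Proof. by elim: k1 rho => [|k1 IH] rho //=; apply: eq_bigr => j _; rewrite IH. Qed.

Lemma mulr_sum_varsl k c F rho : c * sum_vars k F rho = sum_vars k (fun r => c * F r) rho.
Proof.
elim: k rho => [|k IH] rho //=.
by rewrite mulr_sumr; apply: eq_bigr => j _; exact: IH.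
Qed.

Lemma mulr_sum_varsr k c F rho : sum_vars k F rho * c = sum_vars k (fun r => F r * c) rho.
Proof.
elim: k rho => [|k IH] rho //=.
by rewrite mulr_suml; apply: eq_bigr => j _; exact: IH.
Qed.

Lemma sum_vars_big k (I : Type) (s : seq I) F rho :
  \sum_(i <- s) sum_vars k (F i) rho = sum_vars k (fun r => \sum_(i <- s) F i r) rho.
Proof.
elim: k rho => [|k IH] rho //=.
by rewrite exchange_big; apply: eq_bigr => j _; exact: IH.
Qed.

Lemma sum_vars0 k rho : sum_vars k (fun _ => 0) rho = 0.
Proof. by elim: k rho => [|k IH] rho //=; rewrite big1 // => j _; exact: IH. Qed.

Lemma mono_eval_mul rho m1 m2 q :
  mono_eval rho (mono_mul m1 m2) q = mono_eval rho m1 q * mono_eval rho m2 q.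
Proof.
case: m1 m2 => [[c1 k1] A1] [[c2 k2] A2]; rewrite /mono_eval /mono_mul /=.
rewrite rmorphM /= mulrACA; congr (_ * _).
rewrite sum_varsD mulr_sum_varsr; apply: sum_vars_ext => s1 s1k.
rewrite mulr_sum_varsl; apply: sum_vars_ext => s2 s2k.
rewrite prod_eval_cat; congr (_ * _); apply: prod_eval_rename => x.
  by rewrite -s2k onth_cat_size.
rewrite /lift_above; case: ltnP => [xk2|k2x]; first by rewrite !onth_cat s2k xk2.
rewrite onth_cat s2k ltnNge (leq_trans k2x (leq_addr _ _)) /= [RHS]onth_cat s2k ltnNge k2x.
by rewrite -addnBAC // -s1k onth_cat_size.
Qed.

Lemma poly_eval_mul rho P1 P2 q :
  poly_eval rho [seq mono_mul m1 m2 | m1 <- P1, m2 <- P2] q =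
  poly_eval rho P1 q * poly_eval rho P2 q.
Proof.
elim: P1 => [|m P1 IH]; first by rewrite /poly_eval big_nil mul0r.
rewrite allpairs_cons poly_eval_cat IH /poly_eval big_cons mulrDl big_map.
by congr (_ + _); rewrite mulr_sumr; apply: eq_bigr => m2 _; rewrite mono_eval_mul.
Qed.

Lemma pds_cons rho d ds F : pds rho (d :: ds) F = pds rho ds (pd (dir_index rho d) F).
Proof. by []. Qed.

Lemma pds_rcons rho ds d F : pds rho (rcons ds d) F = pd (dir_index rho d) (pds rho ds F).
Proof. by elim: ds F => [|d' ds IH] F //=. Qed.

Hypothesis pd_theta : forall i q, pd i (theta l) q = theta l q * pd i l q.
Hypothesis atom_fun_derivable : forall rho a i q, derivable_atom a ->
  derivable (atom_fun rho a.1.1 a.1.2 a.2) q (ev R i).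

Lemma is_derive_atom rho a d q : derivable_atom a ->
  is_derive q (ev R (dir_index rho d)) (atom_eval rho a) (lin_eval rho (atom_derive a d) q).
Proof.
move=> da; split; first exact: atom_fun_derivable.
rewrite /atom_derive; case: ifP => [/andP[/eqP b2 /eqP ds0]|_];
  rewrite /lin_eval big_seq1 mul1r.
  case: a b2 ds0 da => [[b xs] ds] /= -> -> _.
  by rewrite /prod_eval !big_cons big_nil mulr1; exact: pd_theta.
by rewrite /prod_eval big_seq1 /atom_eval /atom_fun /= pds_rcons.
Qed.

Lemma is_derive_prod rho A d q : all derivable_atom A ->
  is_derive q (ev R (dir_index rho d)) (prod_eval rho A)
    (lin_eval rho (prod_derive d A) q).
Proof.
elim: A => [_|a A IH /= /andP[da dA]].
  have -> : prod_eval rho [::] = fun _ => 1 by apply/funext => q'; rewrite /prod_eval big_nil.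
  by rewrite /lin_eval big_nil; exact: is_derive_cst.
have -> : prod_eval rho (a :: A) = fun q' => atom_eval rho a q' * prod_eval rho A q'.
  by apply/funext => q'; rewrite /prod_eval big_cons.
apply: is_derive_eq; first exact: is_deriveM (is_derive_atom rho a d q da) (IH dA).
rewrite /GRing.scale /= lin_eval_cat /lin_eval !big_map !mulr_sumr addrC.
congr (_ + _); apply: eq_bigr => p _; rewrite ?prod_eval_cat /prod_eval ?big_cons /=; ring.
Qed.

Lemma dir_index_shift (s rho : seq 'I_n) d :
  dir_index (s ++ rho) (dir_shift (size s) d) = dir_index rho d.
Proof. by case: d => [|[|x]] //=; rewrite onth_cat_size. Qed.

Lemma is_derive_sum_vars k (F : seq 'I_n -> V -> R) (G : seq 'I_n -> R) v rho q :
  (forall s, size s = k -> is_derive q v (F (s ++ rho)) (G (s ++ rho))) ->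
  is_derive q v (fun q' => sum_vars k (fun r => F r q') rho) (sum_vars k G rho).
Proof.
elim: k rho => [|k IH] rho FG /=; first exact: (FG [::]).
apply: is_derive_big_seq => j _; apply: IH => s sk.
by rewrite -cat_rcons; apply: FG; rewrite size_rcons sk.
Qed.

Lemma is_derive_mono rho m d q : all derivable_atom m.2 ->
  is_derive q (ev R (dir_index rho d)) (mono_eval rho m) (poly_eval rho (mono_derive d m) q).
Proof.
case: m => [[c k] A] /= dA; rewrite /poly_eval /mono_derive big_map /=.
have dS : is_derive q (ev R (dir_index rho d))
    (fun q' => sum_vars k (fun r => prod_eval r A q') rho)
    (sum_vars k (fun r => lin_eval r (prod_derive (dir_shift k d) A) q) rho).
  apply: is_derive_sum_vars => s sk.
  by rewrite -(dir_index_shift s) sk; exact: is_derive_prod.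
apply: is_derive_eq (is_deriveZ c%:~R dS) _.
rewrite /GRing.scale /= /lin_eval -sum_vars_big mulr_sumr.
apply: eq_bigr => p _; rewrite /mono_eval /= rmorphM -mulrA.
by congr (_ * _); rewrite mulr_sum_varsl.
Qed.

Lemma is_derive_poly rho P d q : all (fun m => all derivable_atom m.2) P ->
  is_derive q (ev R (dir_index rho d)) (poly_eval rho P) (poly_eval rho (poly_derive d P) q).
Proof.
move=> /allP dP; rewrite {2}/poly_eval /poly_derive big_flatten big_map /=.
by apply: is_derive_big_seq => m mP; exact: is_derive_mono (dP m mP).
Qed.

Lemma normalize_sound e : derivable_expr e ->
  forall rho q, jet_eval rho e q = poly_eval rho (normalize e) q.
Proof.
elim: e => [c|b xs ds|e1 IH1 e2 IH2|e1 IH1 e2 IH2|e IH|e IH|d e IH] /=.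
- by move=> _ rho q; rewrite /poly_eval big_seq1 /mono_eval /prod_eval /= big_nil mulr1 pmulrn.
- by move=> _ rho q; rewrite /poly_eval big_seq1 /mono_eval /prod_eval /= big_seq1 mul1r.
- by case/andP => d1 d2 rho q; rewrite poly_eval_cat IH1 ?IH2.
- by case/andP => d1 d2 rho q; rewrite poly_eval_mul IH1 ?IH2.
- move=> de rho q; rewrite IH // /poly_eval big_map -sumrN; apply: eq_bigr => m _.
  by rewrite /mono_eval /= rmorphN mulNr.
- move=> de rho q; under eq_bigr => j _ do rewrite IH //.
  rewrite /poly_eval big_map exchange_big /=; apply: eq_bigr => m _.
  by rewrite /mono_eval /= mulr_sumr.
- case/andP => de dP rho q.
  have -> : jet_eval rho e = poly_eval rho (normalize e) by apply/funext => q'; rewrite IH.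
  by case: (is_derive_poly rho (normalize e) d q dP).
Qed.

Hypothesis vanishing_atom_eval : forall rho a q, vanishing_atom a -> atom_eval rho a q = 0.
Hypothesis atom_fun_swap : forall rho b xs ds1 d1 d2 ds2,
  commuting_atom (b, xs, ds1 ++ d1 :: d2 :: ds2) ->
  atom_fun rho b xs (ds1 ++ d1 :: d2 :: ds2) = atom_fun rho b xs (ds1 ++ d2 :: d1 :: ds2).
Hypothesis atom_fun_hC : forall rho x y ds,
  atom_fun rho 3 [:: x; y] ds = atom_fun rho 3 [:: y; x] ds.

Lemma size_bubble_pass x ds : size (bubble_pass x ds) = (size ds).+1.
Proof. by elim: ds x => [|y ds IH] x //=; case: ifP => _ /=; rewrite IH. Qed.

Lemma commuting_atom_size b xs ds ds' :
  size ds = size ds' -> commuting_atom (b, xs, ds) = commuting_atom (b, xs, ds').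
Proof. by rewrite /commuting_atom /= => ->. Qed.

Lemma atom_fun_bubble_pass rho b xs pre x ds : commuting_atom (b, xs, pre ++ x :: ds) ->
  atom_fun rho b xs (pre ++ bubble_pass x ds) = atom_fun rho b xs (pre ++ x :: ds).
Proof.
elim: ds pre x => [|y ds IH] pre x //= cab.
have cab' z w : commuting_atom (b, xs, rcons pre z ++ w :: ds).
  by move: cab; rewrite /commuting_atom /= !size_cat size_rcons addSnnS.
case: ifP => _; rewrite -[pre ++ _ :: bubble_pass _ _]cat_rcons IH // cat_rcons //.
by rewrite atom_fun_swap // -cat_rcons.
Qed.

Lemma size_bubble_step ds : size (bubble_step ds) = size ds.
Proof. by case: ds => [|x ds] //=; rewrite size_bubble_pass. Qed.

Lemma atom_fun_bubble_sort rho b xs ds : commuting_atom (b, xs, ds) ->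
  atom_fun rho b xs (bubble_sort ds) = atom_fun rho b xs ds.
Proof.
move=> cab; rewrite /bubble_sort; elim: (size ds) => [|k IH] //=.
have size_k : size (iter k bubble_step ds) = size ds.
  by elim: k {IH} => [|k IHk] //=; rewrite size_bubble_step.
rewrite -IH; case: (iter k bubble_step ds) size_k => [|x s] //= size_k.
apply: (atom_fun_bubble_pass rho b xs [::]).
by rewrite (commuting_atom_size b xs _ ds).
Qed.

Lemma atom_eval_canon rho a q : atom_eval rho (atom_canon a) q = atom_eval rho a q.
Proof.
case: a => [[b xs] ds]; rewrite /atom_eval /atom_canon /=.
transitivity (atom_fun rho b (if b == 3%N then sort_pair xs else xs) ds q).
  by case cab: (commuting_atom (b, xs, ds)); rewrite ?atom_fun_bubble_sort.
case: eqP => [->|] //.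
by case: xs => [|x [|y [|z xs]]] //=; case: ifP => _ //; rewrite atom_fun_hC.
Qed.

Lemma mono_eval_sort_atoms rho m q : mono_eval rho (sort_atoms m) q = mono_eval rho m q.
Proof.
rewrite /mono_eval /sort_atoms /=; congr (_ * _); apply: sum_vars_ext => s _.
rewrite /prod_eval (perm_big _ (permEl (perm_sort atom_leq _))) big_map.
by apply: eq_bigr => a _; rewrite atom_eval_canon.
Qed.

Fixpoint swap_at (i : nat) (r : seq 'I_n) : seq 'I_n :=
  match i, r with
  | 0, j :: k :: r' => k :: j :: r'
  | i'.+1, j :: r' => j :: swap_at i' r'
  | _, _ => r
  end.

Lemma onth_swap_at i r x :
  (i.+1 < size r)%N -> onth r (swap_var i x) = onth (swap_at i r) x.
Proof.
elim: i r x => [|i IH] [|j r] x //; first by case: r => [|k r] // _; case: x => [|[|x]].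
move=> ir; case: x => [|x] //=.
by rewrite -IH // /swap_var !eqSS; case: eqP => //; case: eqP.
Qed.

Lemma swap_at_cat (s r : seq 'I_n) j k :
  swap_at (size s) (s ++ j :: k :: r) = s ++ k :: j :: r.
Proof. by elim: s => [|x s IH] //=; rewrite IH. Qed.

Lemma sum_vars_swap_at k i (G : seq 'I_n -> R) rho : (i.+1 < k)%N ->
  sum_vars k (fun r => G (swap_at i r)) rho = sum_vars k G rho.
Proof.
move=> ik; rewrite -(subnK ik) !sum_varsD; apply: sum_vars_ext => s _ /=.
rewrite exchange_big /=; apply: eq_bigr => j _; apply: eq_bigr => k' _.
by apply: sum_vars_ext => s' s'i; rewrite -s'i swap_at_cat.
Qed.

Lemma mono_eval_swap rho m i q : mono_eval rho (mono_swap m i) q = mono_eval rho m q.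
Proof.
rewrite /mono_swap; case: ifP => // ik; rewrite /mono_eval /=; congr (_ * _).
rewrite -(sum_vars_swap_at _ _ (fun r => prod_eval r m.2 q) rho ik).
apply: sum_vars_ext => s sk; apply: prod_eval_rename => x.
by apply: onth_swap_at; rewrite size_cat sk ltn_addr.
Qed.

Lemma mono_eval_canon rho m q : mono_eval rho (mono_canon m) q = mono_eval rho m q.
Proof.
rewrite /mono_canon /pick_min.
have : forall c, c \in [seq sort_atoms (foldl mono_swap m w) | w <- swap_words m.1.2] ->
    mono_eval rho c q = mono_eval rho m q.
  move=> c /mapP[w _ ->]; rewrite mono_eval_sort_atoms.
  by elim: w m => [|i w IH] m' //=; rewrite IH mono_eval_swap.
elim: (map _ _) (sort_atoms m) (mono_eval_sort_atoms rho m q) => [|c L IH] m' //= m'E LE.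
apply: IH => [|c' c'L]; last by apply: LE; rewrite in_cons c'L orbT.
by case: ifP => _ //; apply: LE; rewrite mem_head.
Qed.

Lemma poly_eval_add_mono rho m P q :
  poly_eval rho (add_mono m P) q = mono_eval rho m q + poly_eval rho P q.
Proof.
elim: P => [|m' P IH] /=; first by rewrite /poly_eval big_seq1 big_nil addr0.
case: ifP => [/andP[/eqP km /eqP Am]|_]; rewrite /poly_eval !big_cons.
  case: m km Am {IH} => [[c k] A] /= <- <-; rewrite addrA [_ + mono_eval _ _ _]addrC.
  by rewrite /mono_eval /= rmorphD mulrDl.
by rewrite -/(poly_eval _ _ _) IH addrCA.
Qed.

Lemma mono_eval_vanishing rho m q : has vanishing_atom m.2 -> mono_eval rho m q = 0.
Proof.
move=> /hasP[a aA va]; rewrite /mono_eval (sum_vars_ext _ _ (fun _ => 0) rho rho).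
  by rewrite sum_vars0 mulr0.
move=> s _; rewrite /prod_eval (big_rem a aA) /= vanishing_atom_eval ?mul0r //.
Qed.

Lemma reduce_sound rho P q : poly_eval rho (reduce P) q = poly_eval rho P q.
Proof.
rewrite /reduce; elim: P => [|m P IH] //=; rewrite /poly_eval big_cons -/(poly_eval _ _ _).
case: ifP => /= [_|/negbFE vm]; first by rewrite poly_eval_add_mono IH mono_eval_canon.
by rewrite IH mono_eval_vanishing ?add0r.
Qed.

Lemma check_zero_sound e q : check_zero e -> jet_eval [::] e q = 0.
Proof.
case/andP => de /allP c0; rewrite normalize_sound // -reduce_sound /poly_eval big1_seq //.
by move=> m /andP[_ mP]; rewrite /mono_eval (eqP (c0 m mP)) mul0r.
Qed.

End jet_semantics.
Arguments dir_index {n}.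
Arguments pds {R n}.
Arguments base_fun {R n}.
Arguments atom_fun {R n}.
Arguments atom_eval {R n}.
Arguments jet_eval {R n}.
Arguments check_zero_sound {R n h l u Psi}.

(** * The weighted identity *)

Section xpart_derivatives.
Context {R : realType} {n : nat}.
Local Notation V := 'rV[R]_(2 + n).
Implicit Types (g : 'rV[R]_n -> R) (p w : V).

Lemma xpart_ev_xI (j : 'I_n) : xpart (ev R (xI j)) = ev R j.
Proof. by apply/matrixP => i k; rewrite !mxE eq_rshift. Qed.

Lemma xpart_ev_lshift (i : 'I_2) : xpart (ev R (lshift n i)) = 0.
Proof. by apply/matrixP => i' k; rewrite !mxE [rshift _ _ == _]eq_sym eq_lrshift andbF. Qed.

Lemma xpart_evP (i : 'I_(2 + n)) : (exists j, i = xI j) \/ xpart (ev R i) = 0.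
Proof.
case: (splitP i) => [i' ii'|j ij]; last by left; exists j; exact: val_inj.
by right; rewrite (_ : i = lshift n i') ?xpart_ev_lshift //; exact: val_inj.
Qed.

Let xpart_quotient g p w :
  (fun t : R => t^-1 *: (((g \o @xpart R n) \o shift p) (t *: w) - g (xpart p))) =
  (fun t : R => t^-1 *: ((g \o shift (xpart p)) (t *: xpart w) - g (xpart p))).
Proof. by apply/funext => t /=; rewrite /xpart linearP. Qed.

Lemma derivable_comp_xpart g p w :
  derivable (g \o @xpart R n) p w <-> derivable g (xpart p) (xpart w).
Proof. by rewrite /derivable xpart_quotient. Qed.

Lemma pd_comp_xpart g i :
  pd i (g \o @xpart R n) = (fun x => derive g x (xpart (ev R i))) \o @xpart R n.
Proof. by apply/funext => p; rewrite /pd /derive xpart_quotient. Qed.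

Lemma pd_comp_xpart_xI g j : pd (xI j) (g \o @xpart R n) = pd j g \o @xpart R n.
Proof. by rewrite pd_comp_xpart xpart_ev_xI. Qed.

Lemma pd_comp_xpart_eq0 g i : xpart (ev R i) = 0 -> pd i (g \o @xpart R n) = fun _ => 0.
Proof. by move=> e0; rewrite pd_comp_xpart e0; apply/funext => p /=; rewrite derive0. Qed.

Lemma Ck_comp_xpart k g : Ck k g -> Ck k (g \o @xpart R n).
Proof.
have cont g' : continuous g' -> continuous (g' \o @xpart R n).
  by move=> cg p; apply: continuous_comp; [exact: continuous_rsubmx | exact: cg].
elim: k g => [|k IH] g; first exact: cont.
case=> cg [dg pdg]; split; first exact: cont.
split=> [i p|i]; case: (xpart_evP i) => [[j ->]|e0].
- by apply/derivable_comp_xpart; rewrite xpart_ev_xI; exact: dg.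
- by apply/derivable_comp_xpart; rewrite e0; exact: derivable0.
- by rewrite pd_comp_xpart_xI; exact: IH (pdg j).
- by rewrite pd_comp_xpart_eq0 //; exact: Ck_cst.
Qed.

Lemma pds_cat (rho : seq 'I_n) ds1 ds2 (f : V -> R) :
  pds rho (ds1 ++ ds2) f = pds rho ds2 (pds rho ds1 f).
Proof. by elim: ds1 f => [|d ds IH] f //=. Qed.

Lemma pds_cst0 (rho : seq 'I_n) ds : pds rho ds (fun _ : V => 0 : R) = fun _ => 0.
Proof. by elim: ds => [|d ds IH] //=; rewrite pd_cst. Qed.

Lemma pds_comp_xpart_ts (rho : seq 'I_n) ds g : has (fun d => (d < 2)%N) ds ->
  pds rho ds (g \o @xpart R n) = fun _ => 0.
Proof.
have ts_eq0 d : (d < 2)%N -> xpart (ev R (dir_index rho d)) = 0.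
  by case: d => [|[|d]] // _; exact: xpart_ev_lshift.
elim: ds g => [|d ds IH] g //= ts_ds.
have [d_ts|] := ltnP d 2; first by rewrite pd_comp_xpart_eq0 ?pds_cst0 ?ts_eq0.
case: d ts_ds => [|[|d]] //= ds_ts _.
case: (onth rho d) => [j|]; first by rewrite pd_comp_xpart_xI; exact: IH.
by rewrite pd_comp_xpart_eq0 ?pds_cst0 // xpart_ev_lshift.
Qed.

Lemma Ck_pds (rho : seq 'I_n) {ds k} {f : V -> R} :
  Ck (size ds + k) f -> Ck k (pds rho ds f).
Proof. by elim: ds f => [|d ds IH] f //= f_C; apply: IH; apply: Ck_pd; rewrite -addSn. Qed.

End xpart_derivatives.

Declare Scope jet_scope.
Delimit Scope jet_scope with jet.
Notation "a #+ b" := (Add a b) (at level 50, left associativity) : jet_scope.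
Notation "a #- b" := (Add a (Opp b)) (at level 50, left associativity) : jet_scope.
Notation "a #* b" := (Mul a b) (at level 40, left associativity) : jet_scope.
Local Open Scope jet_scope.

Definition xdir (x : nat) := x.+2.
Definition jl ds := Atom 0 [::] ds.
Definition ju ds := Atom 1 [::] ds.
Definition jtheta := Atom 2 [::] [::].
Definition jh x y ds := Atom 3 [:: x; y] ds.
Definition jPsi ds := Atom 4 [::] ds.
Definition jv := jtheta #* ju [::].
Definition jsq e := e #* e.

Definition A_expr : jet_expr :=
  Sum (Sum (jh 1 0 [::] #* jl [:: xdir 1] #* jl [:: xdir 0]
            #- jh 1 0 [:: xdir 1] #* jl [:: xdir 0]
            #- jh 1 0 [::] #* jl [:: xdir 1; xdir 0]))
  #- jsq (jl [:: 0]) #- jsq (jl [:: 1]) #+ jl [:: 0; 0] #+ jl [:: 1; 1] #- jPsi [::].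

Definition c_expr (x y : nat) : jet_expr :=
  Sum (Sum (Cst 2 #* jh (x + 2) 0 [::] #* Der (xdir 0) (jh 1 (y + 2) [::] #* jl [:: xdir 1])
            #- Der (xdir 0) (jh (x + 2) (y + 2) [::] #* jh 1 0 [::] #* jl [:: xdir 1])))
  #+ jh x y [::] #* (jl [:: 0; 0] #+ jl [:: 1; 1] #- jPsi [::]).

Definition B_expr : jet_expr :=
  Cst 2 #* (A_expr #* jPsi [::] #- Der 0 (A_expr #* jl [:: 0]) #- Der 1 (A_expr #* jl [:: 1])
            #+ Sum (Sum (Der (xdir 0) (A_expr #* jh 1 0 [::] #* jl [:: xdir 1])))).

Definition V_expr (y : nat) : jet_expr :=
  Cst 2 #* Sum (Sum (Sum (jh 2 (y + 3) [::] #* jh 1 0 [::] #* jl [:: xdir 1]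
                          #* Der (xdir 2) jv #* Der (xdir 0) jv)))
  #+ Sum (jh 0 (y + 1) [::] #* A_expr #* jl [:: xdir 0]) #* jsq jv
  #- jPsi [::] #* jv #* Sum (jh 0 (y + 1) [::] #* Der (xdir 0) jv)
  #- Sum (Sum (Sum (jh 2 (y + 3) [::] #* jh 1 0 [::] #* jl [:: xdir 2]
                    #* Der (xdir 1) jv #* Der (xdir 0) jv)))
  #- Cst 2 #* (jl [:: 0] #* Der 0 jv #+ jl [:: 1] #* Der 1 jv)
     #* Sum (jh 0 (y + 1) [::] #* Der (xdir 0) jv)
  #+ Sum (jh 0 (y + 1) [::] #* jl [:: xdir 0]) #* (jsq (Der 0 jv) #+ jsq (Der 1 jv)).

Definition M_expr : jet_expr :=
  jl [:: 0] #* (jsq (Der 0 jv) #- jsq (Der 1 jv)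
                #+ Sum (Sum (jh 1 0 [::] #* Der (xdir 1) jv #* Der (xdir 0) jv)))
  #- Cst 2 #* Sum (Sum (jh 1 0 [::] #* jl [:: xdir 1] #* Der (xdir 0) jv)) #* Der 0 jv
  #+ Cst 2 #* jl [:: 1] #* Der 1 jv #* Der 0 jv #+ jPsi [::] #* jv #* Der 0 jv
  #- A_expr #* jl [:: 0] #* jsq jv.

Definition N_expr : jet_expr :=
  jl [:: 1] #* (jsq (Der 1 jv) #- jsq (Der 0 jv)
                #+ Sum (Sum (jh 1 0 [::] #* Der (xdir 1) jv #* Der (xdir 0) jv)))
  #- Cst 2 #* Sum (Sum (jh 1 0 [::] #* jl [:: xdir 1] #* Der (xdir 0) jv)) #* Der 1 jv
  #+ Cst 2 #* jl [:: 0] #* Der 1 jv #* Der 0 jv #+ jPsi [::] #* jv #* Der 1 jv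
  #- A_expr #* jl [:: 1] #* jsq jv.

Definition Pu_expr : jet_expr :=
  ju [:: 0; 0] #+ ju [:: 1; 1] #- Sum (Sum (Der (xdir 0) (jh 1 0 [::] #* ju [:: xdir 1]))).

Definition lhs31_expr : jet_expr :=
  jsq jtheta #* jsq Pu_expr #+ Cst 2 #* Sum (Der (xdir 0) (V_expr 0))
  #+ Cst 2 #* Der 0 M_expr #+ Cst 2 #* Der 1 N_expr.

Definition div_hl_expr : jet_expr := Sum (Sum (Der (xdir 0) (jh 1 0 [::] #* jl [:: xdir 1]))).

Definition rhs31_expr : jet_expr :=
  Cst 2 #* (jl [:: 0; 0] #- jl [:: 1; 1] #+ div_hl_expr #+ jPsi [::]) #* jsq (Der 0 jv)
  #- Cst 8 #* Sum (Sum (jh 1 0 [::] #* jl [:: 0; xdir 1] #* Der (xdir 0) jv #* Der 0 jv))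
  #+ Cst 8 #* jl [:: 1; 0] #* Der 1 jv #* Der 0 jv
  #- Cst 8 #* Sum (Sum (jh 1 0 [::] #* jl [:: 1; xdir 1] #* Der (xdir 0) jv #* Der 1 jv))
  #+ Cst 2 #* (jl [:: 1; 1] #- jl [:: 0; 0] #+ div_hl_expr #+ jPsi [::]) #* jsq (Der 1 jv)
  #+ Cst 2 #* Sum (Sum (c_expr 1 0 #* Der (xdir 1) jv #* Der (xdir 0) jv))
  #- Cst 2 #* Sum (Sum (jh 1 0 [::] #* jPsi [:: xdir 1] #* jv #* Der (xdir 0) jv))
  #+ B_expr #* jsq jv.

Definition I1_expr : jet_expr :=
  Der 0 (Der 0 jv) #+ Der 1 (Der 1 jv)
  #- Sum (Sum (Der (xdir 0) (jh 1 0 [::] #* Der (xdir 1) jv))) #- A_expr #* jv.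

Definition I2_expr : jet_expr :=
  Opp (Cst 2 #* jl [:: 0] #* Der 0 jv) #- Cst 2 #* jl [:: 1] #* Der 1 jv
  #+ Cst 2 #* Sum (Sum (jh 1 0 [::] #* jl [:: xdir 1] #* Der (xdir 0) jv)) #- jPsi [::] #* jv.

Definition identity_expr : jet_expr :=
  lhs31_expr #- (rhs31_expr #+ (jsq I1_expr #+ jsq I2_expr)).

Section weights.
Context {R : realType} {n : nat}.
Variables (h : 'I_n -> 'I_n -> 'rV[R]_n -> R)
  (l u : 'rV[R]_(2 + n) -> R) (Psi : 'rV[R]_n -> R).
Local Notation v := (v l u).

Definition I1 (p : 'rV[R]_(2 + n)) : R :=
  Dt (Dt v) p + Ds (Ds v) p
  - \sum_(j < n) \sum_(k < n) Dx k (fun q => H h j k q * Dx j v q) p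
  - A h l Psi p * v p.

Definition I2 (p : 'rV[R]_(2 + n)) : R :=
  - (2 * Dt l p * Dt v p) - 2 * Ds l p * Ds v p
  + 2 * (\sum_(j < n) \sum_(k < n) H h j k p * Dx j l p * Dx k v p)
  - Ps Psi p * v p.

End weights.

Section jet_instance.
Variables (R : realType) (n : nat) (h : 'I_n -> 'I_n -> 'rV[R]_n -> R)
  (l u : 'rV[R]_(2 + n) -> R) (Psi : 'rV[R]_n -> R).
Hypothesis h_sym : forall j k : 'I_n, h j k = h k j.
Hypothesis h_C2 : forall j k : 'I_n, Ck 2 (h j k).
Hypothesis u_C2 : Ck 2 u.
Hypothesis l_C3 : Ck 3 l.
Hypothesis Psi_C1 : Ck 1 Psi.
Local Notation atom_fun := (atom_fun h l u Psi).
Local Notation base_fun := (base_fun h l u Psi).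

Lemma pd_theta i q : pd i (theta l) q = theta l q * pd i l q.
Proof. by case: (is_derive_expR_comp (Ck_derivable l_C3 i q)). Qed.

Definition smoothness (b : nat) : nat :=
  match b with 0 => 3 | 1 => 2 | 3 => 2 | _ => 1 end.

Lemma Ck_base_fun rho b xs : b != 2%N -> Ck (smoothness b) (base_fun rho b xs).
Proof.
case: b => [_|[_|[//|[_|b _]]]].
- exact: l_C3.
- exact: u_C2.
- rewrite /base_fun; case: (map (onth rho) xs) => [|[j|] [|[k|] [|? ?]]];
    try exact: Ck_cst.
  exact: Ck_comp_xpart (h_C2 j k).
- exact: Ck_comp_xpart Psi_C1.
Qed.

Lemma base_fun_comp_xpart rho b xs : (3 <= b)%N ->
  exists g : 'rV[R]_n -> R, base_fun rho b xs = g \o @xpart R n.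
Proof.
case: b => [|[|[|[|b]]]] // _; last by exists Psi.
rewrite /base_fun; case: (map (onth rho) xs) => [|[j|] [|[k|] [|? ?]]];
  by [exists (fun _ => 0) | exists (h j k)].
Qed.

Lemma atom_fun_derivable rho (a : atom) i q : derivable_atom a ->
  derivable (atom_fun rho a.1.1 a.1.2 a.2) q (ev R i).
Proof.
case: a => [[b xs] ds] /=; have [->|b2] := eqVneq b 2%N.
  rewrite /derivable_atom /= => /eqP ->.
  by case: (is_derive_expR_comp (Ck_derivable l_C3 i q)).
move=> da; have ds_b : (size ds + 1 <= smoothness b)%N.
  by move: da b2; rewrite /derivable_atom addn1 /=; case: b => [|[|[|[|[|b]]]]] //= /eqP ->.
exact: Ck_derivable (Ck_pds rho (Ck_le ds_b (Ck_base_fun rho b xs b2))) i q.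
Qed.

Lemma atom_fun_swap rho b xs ds1 d1 d2 ds2 :
  commuting_atom (b, xs, ds1 ++ d1 :: d2 :: ds2) ->
  atom_fun rho b xs (ds1 ++ d1 :: d2 :: ds2) = atom_fun rho b xs (ds1 ++ d2 :: d1 :: ds2).
Proof.
move=> cab; have [b2 ds_b] : b != 2%N /\ (size (ds1 ++ d1 :: d2 :: ds2) <= smoothness b)%N.
  by move: cab; rewrite /commuting_atom /=; case: b => [|[|[|[|b]]]].
have ds1_b : (size ds1 + 2 <= smoothness b)%N.
  by apply: leq_trans ds_b; rewrite size_cat leq_add2l.
have f_C2 := Ck_pds rho (Ck_le ds1_b (Ck_base_fun rho b xs b2)).
rewrite /atom_fun !pds_cat !pds_cons; set F := pds rho ds1 _.
have F_comm : pd (dir_index rho d2) (pd (dir_index rho d1) F) =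
              pd (dir_index rho d1) (pd (dir_index rho d2) F).
  by apply/funext => p; exact: pdC.
by rewrite F_comm.
Qed.

Lemma vanishing_atom_eval rho (a : atom) q :
  vanishing_atom a -> atom_eval h l u Psi rho a q = 0.
Proof.
case: a => [[b xs] ds] /andP[b3 ts_ds].
change (pds rho ds (base_fun rho b xs) q = 0).
by have [g ->] := base_fun_comp_xpart rho b xs b3; rewrite pds_comp_xpart_ts.
Qed.

Lemma atom_fun_hC rho x y ds : atom_fun rho 3 [:: x; y] ds = atom_fun rho 3 [:: y; x] ds.
Proof.
change (pds rho ds (base_fun rho 3 [:: x; y]) = pds rho ds (base_fun rho 3 [:: y; x])).
have -> // : base_fun rho 3 [:: x; y] = base_fun rho 3 [:: y; x].
rewrite /base_fun /=.
by case: (onth rho x) => [j|]; case: (onth rho y) => [k|] //; rewrite /H h_sym.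
Qed.

Lemma lhs31_sum_of_squares p :
  lhs31 h l u Psi p = rhs31 h l u Psi p + I1 h l u Psi p ^+ 2 + I2 h l u Psi p ^+ 2.
Proof.
have check : check_zero identity_expr by vm_compute.
have E := check_zero_sound pd_theta atom_fun_derivable vanishing_atom_eval
  atom_fun_swap atom_fun_hC _ p check.
(* The reified terms evaluate to [rhs31], [I1] and [I2] by mere conversion. *)
change (jet_eval h l u Psi [::] lhs31_expr p
        - (rhs31 h l u Psi p + (I1 h l u Psi p * I1 h l u Psi p
                                + I2 h l u Psi p * I2 h l u Psi p)) = 0) in E.
have lhsE : jet_eval h l u Psi [::] lhs31_expr p = lhs31 h l u Psi p.
  by rewrite /lhs31 real_normK ?num_real.
move/eqP: E; rewrite lhsE subr_eq0 => /eqP ->.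
by rewrite addrA !expr2.
Qed.

End jet_instance.
Arguments lhs31_sum_of_squares {R n h l u Psi}.

Theorem corollary3p1 (R : realType) (n : nat)
  (h : 'I_n -> 'I_n -> 'rV[R]_n -> R)
  (l u : 'rV[R]_(2 + n) -> R) (Psi : 'rV[R]_n -> R)
  (h_sym : forall j k : 'I_n, h j k = h k j)
  (h_C2 : forall j k : 'I_n, Ck 2 (h j k))
  (u_C2 : Ck 2 u) (l_C3 : Ck 3 l) (Psi_C1 : Ck 1 Psi) :
  forall p : 'rV[R]_(2 + n),
    rhs31 h l u Psi p <= lhs31 h l u Psi p.
Proof.
move=> p; rewrite (lhs31_sum_of_squares h_sym h_C2 u_C2 l_C3 Psi_C1) -addrA lerDl.
by rewrite addr_ge0 // sqr_ge0.
Qed.
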